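(* (i) Let $a,b,c\in\mathbb{R}$ be such that $$B=\begin{pmatrix}1&a&b\\ a&1&c\\ b&c&1\end{pmatrix}$$ is positive semidefinite. Then $$\big|\,|a|-|b|\,\big|\le\sqrt{1-|c|^2}\le\sqrt2\,\sqrt{1-|c|},$$ and for every real $k\ge2$, $$\big|\,|a|^k-|b|^k\,\big|\le\sqrt{1-|c|^k}.$$ (ii) If $0\le\alpha,\beta,\gamma\le\pi/2$ and $|\alpha-\beta|\le\gamma\le\alpha+\beta$, then for every integer $k\ge1$, $$|\cos^k\alpha-\cos^k\beta|\le\sqrt{k}\,\sin\gamma.$$ *)

From Stdlib Require Import Reals.
Open Scope R_scope.

(* A real 3x3 matrix, given as a function of row/column indices in {0,1,2}. *)
Definition mat3 := nat -> nat -> R.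

Definition Bmat (a b c : R) : mat3 := fun i j =>
  match i, j with
  | 0, 0 => 1 | 0, 1 => a | 0, 2 => b
  | 1, 0 => a | 1, 1 => 1 | 1, 2 => c
  | 2, 0 => b | 2, 1 => c | 2, 2 => 1
  | _, _ => 0
  end.

Definition psd3 (M : mat3) : Prop :=
  forall x : nat -> R,
    0 <= sum_f_R0 (fun i => sum_f_R0 (fun j => x i * M i j * x j) 2) 2.

(* x^k for x >= 0 and real exponent k > 0, with the convention 0^k = 0
   (Stdlib's Rpower is exp (k * ln x), which gives 1 at x = 0). *)
Definition rpow (x k : R) : R :=
  if Req_EM_T x 0 then 0 else Rpower x k.

From Stdlib Require Import Reals Lra Lia Psatz.
From Coquelicot Require Import Coquelicot.
Open Scope R_scope.

(* Writing |a| = cos α and |b| = cos β with α, β in [0, π/2], positive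
   semidefiniteness of B amounts to |c| <= cos (α - β).  For x = cos α,
   y = cos β and 0 <= z <= cos (α - β), elementary algebra gives
   (x - y)^2 <= 1 - z^2 and (x^2 - y^2)^2 + z^2 <= 1.  For k = 2t with t >= 1
   we apply the second inequality to x^t, y^t, z^t: this is legitimate because
   θ ↦ arccos (cos^t θ) vanishes at 0 and is concave on [0, π/2], hence
   subadditive, so cos^t (α - β) <= cos (α' - β') where cos α' = x^t and
   cos β' = y^t.  Concavity reduces to the convexity of u ↦ u^(1-t).
   Part (ii) is the case of integer exponents, with 1 - z^k <= k (1 - z). *)

Lemma rpow_0_l k : rpow 0 k = 0.
Proof. unfold rpow. destruct (Req_EM_T 0 0); [reflexivity | lra]. Qed.

Lemma rpow_Rpower x k : 0 < x -> rpow x k = Rpower x k.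
Proof. intros Hx. unfold rpow. destruct (Req_EM_T x 0); [lra | reflexivity]. Qed.

Lemma rpow_ge0 x k : 0 <= rpow x k.
Proof. unfold rpow. destruct (Req_EM_T x 0); [lra | left; apply exp_pos]. Qed.

Lemma Rpower_1_l k : Rpower 1 k = 1.
Proof. unfold Rpower. rewrite ln_1, Rmult_0_r. apply exp_0. Qed.

Lemma Rpower_le1 x k : 0 < x <= 1 -> 0 <= k -> Rpower x k <= 1.
Proof.
  intros Hx Hk. apply Rle_trans with (Rpower 1 k).
  - apply Rle_Rpower_l; lra.
  - rewrite Rpower_1_l. lra.
Qed.

Lemma rpow_1_l k : rpow 1 k = 1.
Proof. rewrite rpow_Rpower by lra. apply Rpower_1_l. Qed.

Lemma rpow_le_compat x y k : 0 <= x <= y -> 0 <= k -> rpow x k <= rpow y k.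
Proof.
  intros [[Hx | <-] Hxy] Hk.
  - rewrite !rpow_Rpower by lra. apply Rle_Rpower_l; lra.
  - rewrite rpow_0_l. apply rpow_ge0.
Qed.

Lemma rpow_le1 x k : 0 <= x <= 1 -> 0 <= k -> rpow x k <= 1.
Proof. intros Hx Hk. rewrite <- (rpow_1_l k). apply rpow_le_compat; lra. Qed.

Lemma rpow_le_self x t : 0 <= x <= 1 -> 1 <= t -> rpow x t <= x.
Proof.
  intros [[Hx | <-] Hx1] Ht; [| rewrite rpow_0_l; lra].
  rewrite rpow_Rpower by lra. replace t with (1 + (t - 1)) by ring.
  rewrite Rpower_plus, Rpower_1 by lra.
  assert (0 < Rpower x (t - 1)) by apply exp_pos.
  assert (Rpower x (t - 1) <= 1) by (apply Rpower_le1; lra).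
  nra.
Qed.

Lemma rpow_mult2 x t : 0 <= x -> rpow x (2 * t) = rpow x t ^ 2.
Proof.
  intros [Hx | <-]; [| rewrite !rpow_0_l; ring].
  rewrite !rpow_Rpower by lra. replace (2 * t) with (t + t) by ring.
  rewrite Rpower_plus. ring.
Qed.

Lemma rpow_sqr_l x t : 0 <= x -> rpow x t ^ 2 = rpow (x ^ 2) t.
Proof.
  intros [Hx | <-]; [| rewrite pow_i, !rpow_0_l by lia; ring].
  rewrite !rpow_Rpower by (try apply pow_lt; lra).
  simpl. rewrite !Rmult_1_r. apply Rpower_mult_distr; lra.
Qed.

Lemma rpow_INR x n : 0 <= x -> (1 <= n)%nat -> rpow x (INR n) = x ^ n.
Proof.
  intros [Hx | <-] Hn; [| rewrite rpow_0_l, pow_i by lia; reflexivity].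
  rewrite rpow_Rpower by lra. apply Rpower_pow; lra.
Qed.

Lemma Rabs_le_sqrt w r : w ^ 2 <= r -> Rabs w <= sqrt r.
Proof.
  intros H. rewrite <- (sqrt_pow2 (Rabs w)) by apply Rabs_pos.
  apply sqrt_le_1_alt. now rewrite pow2_abs.
Qed.

Lemma one_sub_pow_le z n : 0 <= z <= 1 -> 1 - z ^ n <= INR n * (1 - z).
Proof.
  intros Hz. induction n as [| n IH]; [simpl; lra |].
  rewrite S_INR. simpl.
  assert (z ^ n <= 1) by (rewrite <- (pow1 n); apply pow_incr; lra).
  nra.
Qed.

Lemma le_of_is_derive_nonneg (f df : R -> R) (a b : R) : a <= b ->
  (forall x, a < x < b -> is_derive f x (df x)) ->
  (forall x, a < x < b -> 0 <= df x) ->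
  (forall x, a <= x <= b -> continuity_pt f x) ->
  f a <= f b.
Proof.
  intros Hab Hder Hpos Hcont.
  (* The mean value point may be an endpoint, where [df] is unconstrained. *)
  destruct (MVT_gen f a b (fun x => Rmax 0 (df x))) as [c [_ Hc]];
    rewrite ?Rmin_left, ?Rmax_right by lra.
  - intros x Hx. rewrite Rmax_right by auto. auto.
  - exact Hcont.
  - pose proof (Rmax_l 0 (df c)). nra.
Qed.

(** * The cosine of an angular distance *)

Definition cos_dist (x y : R) : R := x * y + sqrt (1 - x ^ 2) * sqrt (1 - y ^ 2).

Lemma cos_dist_comm x y : cos_dist x y = cos_dist y x.
Proof. unfold cos_dist. ring. Qed.

Lemma sin_sqrt_cos th : 0 <= th <= PI -> sin th = sqrt (1 - cos th ^ 2).
Proof.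
  intros H. rewrite <- Rsqr_pow2. apply Rtrigo_facts.sin_cos.
  apply Rle_ge, sin_ge_0; lra.
Qed.

Lemma cos_dist_cos a b : 0 <= a <= PI -> 0 <= b <= PI ->
  cos_dist (cos a) (cos b) = cos (a - b).
Proof. intros. unfold cos_dist. rewrite <- !sin_sqrt_cos by lra. rewrite cos_minus. ring. Qed.

Lemma cos_le_cos_dist a b g : 0 <= a <= PI -> 0 <= b <= PI -> Rabs (a - b) <= g <= PI ->
  cos g <= cos_dist (cos a) (cos b).
Proof.
  intros Ha Hb Hg. rewrite cos_dist_cos by lra.
  destruct (Rle_lt_dec b a).
  - rewrite Rabs_right in Hg by lra. apply cos_decr_1; lra.
  - rewrite Rabs_left in Hg by lra.
    rewrite <- (cos_neg (a - b)), Ropp_minus_distr. apply cos_decr_1; lra.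
Qed.

Lemma sqrt_one_sub_sqr x : x ^ 2 <= 1 -> sqrt (1 - x ^ 2) ^ 2 = 1 - x ^ 2.
Proof. intros H. apply pow2_sqrt. lra. Qed.

Lemma cos_dist_sub_bound x y z : 0 <= x <= 1 -> 0 <= y <= 1 ->
  0 <= z <= cos_dist x y -> (x - y) ^ 2 <= 1 - z ^ 2.
Proof.
  unfold cos_dist. intros Hx Hy Hz.
  pose proof (sqrt_one_sub_sqr x ltac:(nra)) as Ex.
  pose proof (sqrt_one_sub_sqr y ltac:(nra)) as Ey.
  pose proof (sqrt_pos (1 - x ^ 2)). pose proof (sqrt_pos (1 - y ^ 2)).
  set (sx := sqrt (1 - x ^ 2)) in *. set (sy := sqrt (1 - y ^ 2)) in *.
  assert (x * y + sx * sy <= 1).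
  { (* 2 (1 - cos_dist x y) = (x - y)^2 + (sx - sy)^2 *)
    pose proof (pow2_ge_0 (x - y)). pose proof (pow2_ge_0 (sx - sy)). lra. }
  assert (z ^ 2 <= (x * y + sx * sy) ^ 2) by nra.
  assert (0 <= x * y * (1 - x * y - sx * sy)) by (apply Rmult_le_pos; nra).
  assert (sx ^ 2 * sy ^ 2 = (1 - x ^ 2) * (1 - y ^ 2)) by (rewrite Ex, Ey; ring).
  lra.
Qed.

Lemma cos_dist_sub_sqr_bound x y z : 0 <= x <= 1 -> 0 <= y <= 1 ->
  0 <= z <= cos_dist x y -> (x ^ 2 - y ^ 2) ^ 2 + z ^ 2 <= 1.
Proof.
  unfold cos_dist. intros Hx Hy Hz.
  pose proof (sqrt_one_sub_sqr x ltac:(nra)) as Ex.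
  pose proof (sqrt_one_sub_sqr y ltac:(nra)) as Ey.
  pose proof (sqrt_pos (1 - x ^ 2)). pose proof (sqrt_pos (1 - y ^ 2)).
  set (sx := sqrt (1 - x ^ 2)) in *. set (sy := sqrt (1 - y ^ 2)) in *.
  assert (z ^ 2 <= (x * y + sx * sy) ^ 2) by nra.
  assert (Id : 1 - (x * y + sx * sy) ^ 2 - (x ^ 2 - y ^ 2) ^ 2 = (x * sx - y * sy) ^ 2).
  { assert (sx ^ 2 * sy ^ 2 = (1 - x ^ 2) * (1 - y ^ 2)) by (rewrite Ex, Ey; ring).
    assert (x ^ 2 * sx ^ 2 = x ^ 2 * (1 - x ^ 2)) by (rewrite Ex; ring).
    assert (y ^ 2 * sy ^ 2 = y ^ 2 * (1 - y ^ 2)) by (rewrite Ey; ring).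
    lra. }
  pose proof (pow2_ge_0 (x * sx - y * sy)). lra.
Qed.

Lemma binary_form_nonneg_disc A B C :
  (forall q r, 0 <= A * q ^ 2 + B * r ^ 2 + 2 * C * q * r) -> C ^ 2 <= A * B.
Proof.
  intros H.
  assert (HA : 0 <= A) by (specialize (H 1 0); lra).
  assert (HB : 0 <= B) by (specialize (H 0 1); lra).
  destruct HA as [HA | <-].
  - specialize (H (- C) A). nra.
  - (* a nonnegative form with no q^2 term cannot have a q r term *)
    specialize (H (- (B + 1) * C) (C ^ 2)).
    assert (C ^ 2 * C ^ 2 <= 0) by nra. nra.
Qed.

Lemma psd3_Bmat_quad a b c : psd3 (Bmat a b c) -> forall p q r,
  0 <= p ^ 2 + q ^ 2 + r ^ 2 + 2 * a * p * q + 2 * b * p * r + 2 * c * q * r.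
Proof.
  intros H p q r.
  specialize (H (fun i => match i with 0%nat => p | 1%nat => q | _ => r end)).
  simpl in H. lra.
Qed.

Lemma psd3_Bmat_minors a b c : psd3 (Bmat a b c) ->
  a ^ 2 <= 1 /\ b ^ 2 <= 1 /\ c ^ 2 <= 1 /\
  (c - a * b) ^ 2 <= (1 - a ^ 2) * (1 - b ^ 2).
Proof.
  intros H. pose proof (psd3_Bmat_quad a b c H) as F.
  assert (a ^ 2 <= 1 * 1).
  { apply binary_form_nonneg_disc. intros p q. specialize (F p q 0). lra. }
  assert (b ^ 2 <= 1 * 1).
  { apply binary_form_nonneg_disc. intros p r. specialize (F p 0 r). lra. }
  assert (c ^ 2 <= 1 * 1).
  { apply binary_form_nonneg_disc. intros q r. specialize (F 0 q r). lra. }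
  repeat split; try lra.
  (* the Schur complement of the top left entry *)
  apply binary_form_nonneg_disc.
  intros q r. specialize (F (- (a * q + b * r)) q r). nra.
Qed.

Lemma psd3_Bmat_cos_dist a b c : psd3 (Bmat a b c) ->
  0 <= Rabs a <= 1 /\ 0 <= Rabs b <= 1 /\ 0 <= Rabs c <= 1 /\
  Rabs c <= cos_dist (Rabs a) (Rabs b).
Proof.
  intros H. destruct (psd3_Bmat_minors a b c H) as [Ha [Hb [Hc Habc]]].
  assert (Habs : forall x, x ^ 2 <= 1 -> 0 <= Rabs x <= 1).
  { intros x Hx. rewrite <- pow2_abs in Hx. pose proof (Rabs_pos x). nra. }
  repeat split; try apply Habs; auto.
  unfold cos_dist. rewrite !pow2_abs, <- sqrt_mult, <- Rabs_mult by lra.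
  replace c with (a * b + (c - a * b)) at 1 by ring.
  eapply Rle_trans; [apply Rabs_triang | apply Rplus_le_compat_l].
  now apply Rabs_le_sqrt.
Qed.

(** * Concavity of θ ↦ arccos (cos^t θ) *)

Lemma Rpower_opp_tangent s v m : 0 < v -> 0 < m -> 0 <= s ->
  Rpower m (- s) - s * Rpower m (- s) / m * (v - m) <= Rpower v (- s).
Proof.
  intros Hv Hm Hs.
  assert (Hvm : 0 < v / m) by (apply Rdiv_lt_0_compat; lra).
  replace v with (m * (v / m)) at 2 by (field; lra).
  rewrite <- Rpower_mult_distr by lra.
  assert (Hexp : 1 - s * (v / m - 1) <= Rpower (v / m) (- s)).
  { unfold Rpower. pose proof (exp_ineq1_le (- s * ln (v / m))).
    pose proof (exp_ineq1_le (ln (v / m))). rewrite exp_ln in * by lra. nra. }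
  replace (Rpower m (- s) - s * Rpower m (- s) / m * (v - m))
    with (Rpower m (- s) * (1 - s * (v / m - 1))) by (field; lra).
  apply Rmult_le_compat_l; [left; apply exp_pos | exact Hexp].
Qed.

(* The chord slopes of the convex function u ↦ u^(-s) towards u = 1 increase with u. *)
Lemma Rpower_opp_chord_le s u2 u1 : 0 < u2 -> u2 <= u1 -> u1 < 1 -> 0 <= s ->
  (1 - u2) * (Rpower u1 (- s) - 1) <= (1 - u1) * (Rpower u2 (- s) - 1).
Proof.
  intros H2 H21 H1 Hs.
  pose proof (Rpower_opp_tangent s 1 u1 ltac:(lra) ltac:(lra) Hs) as T1.
  pose proof (Rpower_opp_tangent s u2 u1 H2 ltac:(lra) Hs) as T2.
  rewrite Rpower_1_l in T1.
  set (w := Rpower u1 (- s)) in *.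
  set (D := s * w / u1) in *.
  assert ((u1 - u2) * (w - 1) <= (u1 - u2) * (D * (1 - u1))) by (apply Rmult_le_compat_l; lra).
  nra.
Qed.

Definition cos_pow (t th : R) : R := Rpower (cos th) t.
Definition sin_pow (t th : R) : R := sqrt (1 - cos_pow t th ^ 2).
(* The derivative of θ ↦ acos (cos_pow t θ); the derivatives of [cos_pow t]
   and [sin_pow t] are [- acos_pow_deriv t * sin_pow t] and
   [acos_pow_deriv t * cos_pow t]. *)
Definition acos_pow_deriv (t th : R) : R :=
  t * cos_pow t th * sin th / (cos th * sin_pow t th).

Lemma cos_pow_0 t : cos_pow t 0 = 1.
Proof. unfold cos_pow. rewrite cos_0. apply Rpower_1_l. Qed.

Lemma cos_pow_antitone t a b : 0 <= t -> 0 <= a <= b -> b < PI / 2 ->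
  cos_pow t b <= cos_pow t a.
Proof.
  intros Ht Hab Hb. pose proof PI_RGT_0. apply Rle_Rpower_l; [lra | split].
  - apply cos_gt_0; lra.
  - apply cos_decr_1; lra.
Qed.

Lemma cos_pow_bounds t th : 0 < t -> 0 < th < PI / 2 -> 0 < cos_pow t th < 1.
Proof.
  intros Ht Hth. pose proof PI_RGT_0. split; [apply exp_pos |].
  rewrite <- (Rpower_1_l t). apply Rlt_Rpower_l; [lra | split].
  - apply cos_gt_0; lra.
  - rewrite <- cos_0. apply cos_decreasing_1; lra.
Qed.

Lemma is_derive_cos_dist_cos_pow t d a :
  0 < cos a -> 0 < cos (a + d) ->
  0 < 1 - cos_pow t a ^ 2 -> 0 < 1 - cos_pow t (a + d) ^ 2 ->
  is_derive (fun x => cos_dist (cos_pow t x) (cos_pow t (x + d))) a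
    ((acos_pow_deriv t a - acos_pow_deriv t (a + d)) *
     (cos_pow t a * sin_pow t (a + d) - sin_pow t a * cos_pow t (a + d))).
Proof.
  unfold acos_pow_deriv, sin_pow, cos_dist, cos_pow, Rpower. intros H1 H2 H3 H4.
  auto_derive; [repeat split; auto |].
  set (ea := exp (t * ln (cos a))) in *. set (eb := exp (t * ln (cos (a + d)))) in *.
  replace (1 + - (ea * (ea * 1))) with (1 - ea ^ 2) by ring.
  replace (1 + - (eb * (eb * 1))) with (1 - eb ^ 2) by ring.
  assert (0 < sqrt (1 - ea ^ 2)) by (apply sqrt_lt_R0; lra).
  assert (0 < sqrt (1 - eb ^ 2)) by (apply sqrt_lt_R0; lra).
  field. repeat split; lra.
Qed.

Lemma continuity_pt_cos_dist f g x : continuity_pt f x -> continuity_pt g x ->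
  f x ^ 2 <= 1 -> g x ^ 2 <= 1 -> continuity_pt (fun y => cos_dist (f y) (g y)) x.
Proof.
  intros Hf Hg Hfx Hgx.
  assert (Hs : forall h, continuity_pt h x -> h x ^ 2 <= 1 ->
            continuity_pt (fun y => sqrt (1 - h y ^ 2)) x).
  { intros h Hh Hhx. apply (continuity_pt_comp (fun y => 1 - h y ^ 2) sqrt).
    - reg. 
    - apply continuity_pt_sqrt. lra. }
  unfold cos_dist. apply continuity_pt_plus; apply continuity_pt_mult; auto.
Qed.

Lemma continuity_pt_cos_pow t x : 0 < cos x -> continuity_pt (cos_pow t) x.
Proof.
  intros H. apply continuity_pt_filterlim.
  apply (ex_derive_continuous (cos_pow t)).
  unfold cos_pow, Rpower. auto_derive. lra.
Qed.

Lemma acos_pow_deriv_sqr t th : 0 < t -> 0 < th < PI / 2 ->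
  acos_pow_deriv t th ^ 2 * (Rpower (cos th ^ 2) (1 - t) - cos th ^ 2) =
  t ^ 2 * (1 - cos th ^ 2).
Proof.
  intros Ht Hth. pose proof PI_RGT_0.
  assert (Hc : 0 < cos th) by (apply cos_gt_0; lra).
  pose proof (cos_pow_bounds t th Ht Hth).
  set (V := Rpower (cos th ^ 2) (1 - t)).
  assert (HVC : V * cos_pow t th ^ 2 = cos th ^ 2).
  { assert (Hsq : cos th ^ 2 = Rpower (cos th) 2).
    { replace 2 with (INR 2) by (simpl; ring). symmetry. apply Rpower_pow; lra. }
    unfold V, cos_pow. rewrite Hsq, Rpower_mult.
    replace (Rpower (cos th) t ^ 2) with (Rpower (cos th) (t + t))
      by (rewrite Rpower_plus; ring).
    rewrite <- Rpower_plus. f_equal. ring. }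
  assert (HS : sin_pow t th ^ 2 = 1 - cos_pow t th ^ 2) by (apply pow2_sqrt; nra).
  assert (0 < sin_pow t th) by (apply sqrt_lt_R0; nra).
  assert (Hsin : sin th ^ 2 = 1 - cos th ^ 2) by (rewrite <- !Rsqr_pow2, sin2; reflexivity).
  replace (V - cos th ^ 2) with (V * sin_pow t th ^ 2) by (rewrite HS, <- HVC; ring).
  transitivity (t ^ 2 * sin th ^ 2 * (V * cos_pow t th ^ 2) / cos th ^ 2).
  - unfold acos_pow_deriv. field. lra.
  - rewrite HVC, Hsin. field. lra.
Qed.

Lemma acos_pow_deriv_ge0 t th : 0 < t -> 0 < th < PI / 2 -> 0 <= acos_pow_deriv t th.
Proof.
  intros Ht Hth. pose proof PI_RGT_0. pose proof (cos_pow_bounds t th Ht Hth).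
  assert (0 < sin th) by (apply sin_gt_0; lra).
  assert (0 < cos th) by (apply cos_gt_0; lra).
  assert (0 < sin_pow t th) by (apply sqrt_lt_R0; nra).
  unfold acos_pow_deriv. apply Rlt_le, Rdiv_lt_0_compat; apply Rmult_lt_0_compat; nra.
Qed.

Lemma acos_pow_deriv_antitone t a b : 1 <= t -> 0 < a <= b -> b < PI / 2 ->
  acos_pow_deriv t b <= acos_pow_deriv t a.
Proof.
  intros Ht Hab Hb. pose proof PI_RGT_0.
  pose proof (acos_pow_deriv_ge0 t a ltac:(lra) ltac:(lra)).
  pose proof (acos_pow_deriv_ge0 t b ltac:(lra) ltac:(lra)).
  pose proof (acos_pow_deriv_sqr t a ltac:(lra) ltac:(lra)) as Ea.
  pose proof (acos_pow_deriv_sqr t b ltac:(lra) ltac:(lra)) as Eb.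
  assert (0 < cos b <= cos a) by (split; [apply cos_gt_0 | apply cos_decr_1]; lra).
  assert (cos a < 1) by (rewrite <- cos_0; apply cos_decreasing_1; lra).
  assert (Hu : cos b ^ 2 <= cos a ^ 2) by nra.
  assert (0 < 1 - cos a ^ 2) by nra.
  assert (0 < t ^ 2) by nra.
  pose proof (Rpower_opp_chord_le (t - 1) (cos b ^ 2) (cos a ^ 2)
                ltac:(nra) Hu ltac:(nra) ltac:(lra)) as Hchord.
  replace (- (t - 1)) with (1 - t) in Hchord by ring.
  set (ua := cos a ^ 2) in *. set (ub := cos b ^ 2) in *.
  set (Va := Rpower ua (1 - t)) in *. set (Vb := Rpower ub (1 - t)) in *.
  set (pa := acos_pow_deriv t a) in *. set (pb := acos_pow_deriv t b) in *.
  pose proof (pow2_ge_0 pa). pose proof (pow2_ge_0 pb).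
  assert (0 < Va - ua) by nra.
  assert (0 < Vb - ub) by nra.
  assert (pb ^ 2 <= pa ^ 2).
  { apply (Rmult_le_reg_r ((Va - ua) * (Vb - ub))); [nra |].
    replace (pb ^ 2 * ((Va - ua) * (Vb - ub))) with (pb ^ 2 * (Vb - ub) * (Va - ua)) by ring.
    replace (pa ^ 2 * ((Va - ua) * (Vb - ub))) with (pa ^ 2 * (Va - ua) * (Vb - ub)) by ring.
    rewrite Ea, Eb. nra. }
  nra.
Qed.

Lemma cos_pow_sub_le t a b : 1 <= t -> 0 < a <= b -> b < PI / 2 ->
  cos_pow t (b - a) <= cos_dist (cos_pow t a) (cos_pow t b).
Proof.
  intros Ht Hab Hb. pose proof PI_RGT_0.
  set (d := b - a).
  assert (Hcos : forall x, 0 <= x <= a -> 0 < cos x /\ 0 < cos (x + d)).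
  { intros x Hx. split; apply cos_gt_0; unfold d; lra. }
  assert (HC : forall th, 0 < cos th -> 0 < cos_pow t th <= 1).
  { intros th Hth. split; [apply exp_pos | apply Rpower_le1; [pose proof (COS_bound th) |]; lra]. }
  assert (HS : forall th, 0 < th < PI / 2 -> 0 < 1 - cos_pow t th ^ 2).
  { intros th Hth. pose proof (cos_pow_bounds t th ltac:(lra) Hth). nra. }
  set (Q := fun x => cos_dist (cos_pow t x) (cos_pow t (x + d))).
  replace (cos_pow t d) with (Q 0).
  2: { unfold Q, cos_dist. rewrite Rplus_0_l, cos_pow_0.
       replace (1 - 1 ^ 2) with 0 by ring. rewrite sqrt_0. ring. }
  replace (cos_dist (cos_pow t a) (cos_pow t b)) with (Q a)
    by (unfold Q; replace (a + d) with b by (unfold d; ring); reflexivity).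
  apply (le_of_is_derive_nonneg Q (fun x =>
    (acos_pow_deriv t x - acos_pow_deriv t (x + d)) *
    (cos_pow t x * sin_pow t (x + d) - sin_pow t x * cos_pow t (x + d)))); [lra | | |].
  - intros x Hx. destruct (Hcos x) as [H1 H2]; [lra |].
    apply is_derive_cos_dist_cos_pow; auto; apply HS; unfold d; lra.
  - intros x Hx. destruct (Hcos x) as [H1 H2]; [lra |].
    pose proof (acos_pow_deriv_antitone t x (x + d) Ht ltac:(unfold d; lra) ltac:(unfold d; lra)).
    pose proof (cos_pow_antitone t x (x + d) ltac:(lra) ltac:(unfold d; lra) ltac:(unfold d; lra)).
    pose proof (HC x H1). pose proof (HC (x + d) H2).
    assert (sin_pow t x <= sin_pow t (x + d)) by (apply sqrt_le_1_alt; nra).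
    pose proof (sqrt_pos (1 - cos_pow t x ^ 2)).
    apply Rmult_le_pos; unfold sin_pow in *; nra.
  - intros x Hx. destruct (Hcos x Hx) as [H1 H2].
    pose proof (HC x H1). pose proof (HC (x + d) H2).
    apply continuity_pt_cos_dist; try nra.
    + now apply continuity_pt_cos_pow.
    + apply (continuity_pt_comp (fun y => y + d) (cos_pow t)); [reg |].
      now apply continuity_pt_cos_pow.
Qed.

Lemma rpow_cos_dist_le_ordered t x y : 1 <= t -> 0 <= y <= x -> x <= 1 ->
  rpow (cos_dist x y) t <= cos_dist (rpow x t) (rpow y t).
Proof.
  intros Ht Hy Hx. pose proof PI_RGT_0. unfold cos_dist.
  (* y = 0 and x = 1 are the angles π/2 and 0, excluded by [cos_pow_sub_le] *)
  destruct (Req_EM_T y 0) as [-> | Hy0].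
  - rewrite rpow_0_l. replace (1 - 0 ^ 2) with 1 by ring.
    rewrite sqrt_1, !Rmult_0_r, !Rplus_0_l, !Rmult_1_r.
    rewrite <- (sqrt_pow2 (rpow (sqrt (1 - x ^ 2)) t)) by apply rpow_ge0.
    apply sqrt_le_1_alt.
    rewrite rpow_sqr_l, sqrt_one_sub_sqr, rpow_sqr_l by (apply sqrt_pos || nra).
    pose proof (rpow_le_self (1 - x ^ 2) t ltac:(nra) Ht).
    pose proof (rpow_le_self (x ^ 2) t ltac:(nra) Ht). lra.
  - destruct (Req_EM_T x 1) as [-> | Hx1].
    + rewrite rpow_1_l. replace (1 - 1 ^ 2) with 0 by ring.
      rewrite sqrt_0, !Rmult_0_l, !Rplus_0_r, !Rmult_1_l. lra.
    + fold (cos_dist x y) (cos_dist (rpow x t) (rpow y t)).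
      set (a := acos x). set (b := acos y).
      assert (Ha : 0 < a < PI) by (apply acos_bound_lt; lra).
      assert (Hb : 0 < b < PI) by (apply acos_bound_lt; lra).
      assert (Ex : cos a = x) by (apply cos_acos; lra).
      assert (Ey : cos b = y) by (apply cos_acos; lra).
      assert (Hb2 : b < PI / 2).
      { destruct (Rlt_le_dec b (PI / 2)) as [h | h]; [exact h |].
        pose proof (cos_le_0 b h ltac:(lra)). lra. }
      assert (Hab : a <= b) by (apply cos_decr_0; lra).
      rewrite <- Ex, <- Ey, cos_dist_cos by lra.
      rewrite <- (cos_neg (a - b)), Ropp_minus_distr.
      rewrite !rpow_Rpower by (apply cos_gt_0; lra).
      apply cos_pow_sub_le; lra.
Qed.

Lemma rpow_cos_dist_le t x y : 1 <= t -> 0 <= x <= 1 -> 0 <= y <= 1 ->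
  rpow (cos_dist x y) t <= cos_dist (rpow x t) (rpow y t).
Proof.
  intros Ht Hx Hy. destruct (Rle_lt_dec y x).
  - apply rpow_cos_dist_le_ordered; lra.
  - rewrite (cos_dist_comm x), (cos_dist_comm (rpow x t)).
    apply rpow_cos_dist_le_ordered; lra.
Qed.

Lemma cos_dist_rpow_sub_sqr_bound t x y z : 1 <= t -> 0 <= x <= 1 -> 0 <= y <= 1 ->
  0 <= z <= cos_dist x y -> (rpow x t ^ 2 - rpow y t ^ 2) ^ 2 + rpow z t ^ 2 <= 1.
Proof.
  intros Ht Hx Hy Hz.
  apply cos_dist_sub_sqr_bound; try (split; [apply rpow_ge0 | apply rpow_le1; lra]).
  split; [apply rpow_ge0 |].
  apply Rle_trans with (rpow (cos_dist x y) t).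
  - apply rpow_le_compat; lra.
  - now apply rpow_cos_dist_le.
Qed.

Lemma cos_dist_pow_sub_bound x y z n : 0 <= x <= 1 -> 0 <= y <= 1 ->
  0 <= z <= cos_dist x y -> (1 <= n)%nat -> (x ^ n - y ^ n) ^ 2 <= INR n * (1 - z ^ 2).
Proof.
  intros Hx Hy Hz Hn.
  pose proof (cos_dist_sub_bound x y z Hx Hy Hz) as H1.
  destruct (Nat.eq_dec n 1) as [-> | Hn1].
  - rewrite !pow_1, Rmult_1_l. exact H1.
  - assert (Hn2 : 2 <= INR n) by (replace 2 with (INR 2) by reflexivity; apply le_INR; lia).
    pose proof (cos_dist_rpow_sub_sqr_bound (INR n / 2) x y z ltac:(lra) Hx Hy Hz) as H.
    rewrite <- !rpow_mult2 in H by lra.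
    replace (2 * (INR n / 2)) with (INR n) in H by field.
    rewrite !rpow_INR in H by (lra || lia).
    assert (Hz1 : z <= 1) by (pose proof (pow2_ge_0 (x - y)); nra).
    pose proof (one_sub_pow_le z n ltac:(lra)).
    assert (INR n * (1 - z) <= INR n * (1 - z ^ 2))
      by (apply Rmult_le_compat_l; [apply pos_INR | nra]).
    lra.
Qed.

Theorem corollary4 :
  (forall a b c : R, psd3 (Bmat a b c) ->
     Rabs (Rabs a - Rabs b) <= sqrt (1 - Rabs c ^ 2) /\
     sqrt (1 - Rabs c ^ 2) <= sqrt 2 * sqrt (1 - Rabs c) /\
     (forall k : R, 2 <= k ->
        Rabs (rpow (Rabs a) k - rpow (Rabs b) k) <= sqrt (1 - rpow (Rabs c) k)))
  /\
  (forall alpha beta gamma : R,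
     0 <= alpha <= PI / 2 -> 0 <= beta <= PI / 2 -> 0 <= gamma <= PI / 2 ->
     Rabs (alpha - beta) <= gamma -> gamma <= alpha + beta ->
     forall k : nat, (1 <= k)%nat ->
       Rabs (cos alpha ^ k - cos beta ^ k) <= sqrt (INR k) * sin gamma).
Proof.
  split.
  - intros a b c Hpsd.
    destruct (psd3_Bmat_cos_dist a b c Hpsd) as [Ha [Hb [Hc Habc]]].
    assert (Hz : 0 <= Rabs c <= cos_dist (Rabs a) (Rabs b)) by lra.
    split; [| split].
    + apply Rabs_le_sqrt, cos_dist_sub_bound; auto.
    + rewrite <- sqrt_mult by lra. apply sqrt_le_1_alt. nra.
    + intros k Hk. replace k with (2 * (k / 2)) by field.
      rewrite !rpow_mult2 by apply Rabs_pos.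
      apply Rabs_le_sqrt.
      pose proof (cos_dist_rpow_sub_sqr_bound (k / 2) _ _ _ ltac:(lra) Ha Hb Hz).
      lra.
  -
    intros al be ga Hal Hbe Hga Hsub _ k Hk. pose proof PI_RGT_0.
    assert (Hcos : forall th, 0 <= th <= PI / 2 -> 0 <= cos th <= 1)
      by (intros th Hth; split; [apply cos_ge_0 | apply COS_bound]; lra).
    pose proof (Hcos ga Hga).
    rewrite (sin_sqrt_cos ga), <- sqrt_mult by (try apply pos_INR; nra).
    apply Rabs_le_sqrt, cos_dist_pow_sub_bound; auto.
    split; [lra |]. apply cos_le_cos_dist; lra.
Qed.
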